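(* Let $D=\mathrm{diag}(d_1,\dots,d_n)\in\mathbb{D}^n_+$, $W\in\mathbb{R}^{n\times n}$, $u\in\mathbb{R}^n$, $A:=W-D$, and $\mathcal X=\{x\in\mathbb{R}^n: Dx\in[0,1]^n\}$. For $\tau>0$ define $f_\tau:\mathcal X\to\mathbb{R}^n$ by $f_\tau(x)=\frac1\tau\left(-Dx+[Dx+\tau(Ax+u)]_0^1\right)$. Then: (i) the set of equilibria $\{x\in\mathcal X: f_\tau(x)=0\}$ does not depend on $\tau>0$; (ii) if $A$ is Lyapunov diagonally stable, then this common equilibrium set consists of exactly one point.
   Context: $\mathbb{D}^n_+$ is the set of $n\times n$ diagonal matrices with positive diagonal entries; $[z]_0^1=\max(0,\min(z,1))$ elementwise. A matrix $M$ is Lyapunov diagonally stable if $M^\top\Lambda+\Lambda M\prec0$ for some $\Lambda\in\mathbb{D}^n_+$. *)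

From HB Require Import structures.
From mathcomp Require Import all_boot all_order all_algebra.
From mathcomp Require Import reals.
Set Implicit Arguments. Unset Strict Implicit. Unset Printing Implicit Defensive.
Import Order.TTheory GRing.Theory Num.Theory.
Local Open Scope ring_scope.

Section Defs.
Variable R : realType.

Definition clamp01 (z : R) : R := Num.max 0 (Num.min z 1).

Definition clampv (n : nat) (v : 'cV[R]_n) : 'cV[R]_n := map_mx clamp01 v.

Definition Dmat (n : nat) (d : 'rV[R]_n) : 'M[R]_n := diag_mx d.

Definition inX (n : nat) (d : 'rV[R]_n) (x : 'cV[R]_n) : Prop :=
  forall i : 'I_n, 0 <= (Dmat d *m x) i 0 <= 1.

Definition f_tau (n : nat) (d : 'rV[R]_n) (W : 'M[R]_n) (u : 'cV[R]_n)
  (tau : R) (x : 'cV[R]_n) : 'cV[R]_n :=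
  let D := Dmat d in
  let A := W - D in
  tau^-1 *: (- (D *m x) + clampv (D *m x + tau *: (A *m x + u))).

Definition equilibrium (n : nat) (d : 'rV[R]_n) (W : 'M[R]_n) (u : 'cV[R]_n)
  (tau : R) (x : 'cV[R]_n) : Prop :=
  inX d x /\ f_tau d W u tau x = 0.

Definition neg_def (n : nat) (S : 'M[R]_n) : Prop :=
  forall v : 'cV[R]_n, v != 0 -> (v^T *m S *m v) 0 0 < 0.

Definition lyap_diag_stable (n : nat) (M : 'M[R]_n) : Prop :=
  exists lam : 'rV[R]_n, (forall i, 0 < lam 0 i) /\
    neg_def (M^T *m diag_mx lam + diag_mx lam *m M).

End Defs.

(* An equilibrium is exactly a solution x of the box-constrained variational
   inequality  D x \in [0,1]^n,  (A x + u) . (t - D x) <= 0  for all t \in [0,1]^n: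
   the clamp is the projection onto [0,1], and tau > 0 only rescales the
   projected step, whence (i).  Diagonal stability makes -A a P-matrix, so two
   solutions, whose coordinates are monotonically related, must coincide.
   Existence is by induction on the number of nondegenerate box coordinates: a
   coordinate k with lo < hi is replaced in turn by the point constraints lo
   and hi and by no constraint at all; one of the three solutions solves the
   original problem, because uniqueness rules out the sign patterns in which
   none does.  In the base case every coordinate is free or pinned, and the
   problem is a linear system that the P-property makes invertible. *)

From HB Require Import structures.
From mathcomp Require Import all_boot all_order all_algebra.
From mathcomp Require Import reals.
From mathcomp Require Import ring lra.
Set Implicit Arguments. Unset Strict Implicit. Unset Printing Implicit Defensive.
Import Order.TTheory GRing.Theory Num.Theory.
Local Open Scope ring_scope.

(* Fiedler-Ptak characterisation of -A being a P-matrix. *)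
Definition neg_P_matrix (R : numDomainType) (n : nat) (A : 'M[R]_n) : Prop :=
  forall v : 'cV[R]_n, (forall i, 0 <= v i 0 * (A *m v) i 0) -> v = 0.

Section BoxVI.
Variables (R : realFieldType) (n : nat) (d : 'I_n -> R).
Variables (A : 'M[R]_n) (u : 'I_n -> R).
Hypothesis d_gt0 : forall i, 0 < d i.
Hypothesis A_negP : neg_P_matrix A.

(* [None] leaves the coordinate free, [Some (lo, hi)] constrains di * y to [lo, hi]. *)
Definition coord_vi (c : option (R * R)) (di y w : R) : Prop :=
  if c is Some (lo, hi) then
    lo <= di * y <= hi /\ forall t, lo <= t <= hi -> w * (t - di * y) <= 0
  else w = 0.

Definition aff (x : 'cV[R]_n) i : R := (A *m x) i 0 + u i.

Definition box_vi (c : 'I_n -> option (R * R)) (x : 'cV[R]_n) : Prop :=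
  forall i, coord_vi (c i) (d i) (x i 0) (aff x i).

Lemma coord_vi_monotone c di y1 y2 w1 w2 : 0 < di ->
  coord_vi c di y1 w1 -> coord_vi c di y2 w2 -> 0 <= (w1 - w2) * (y1 - y2).
Proof.
case: c => [[lo hi]|] di_gt0 /=; last by move=> -> ->; rewrite subrr mul0r.
move=> [/andP[lo1 hi1] vi1] [/andP[lo2 hi2] vi2].
have := vi1 (di * y2); rewrite lo2 hi2 => /(_ isT) le1.
have := vi2 (di * y1); rewrite lo1 hi1 => /(_ isT) le2.
rewrite -(pmulr_rge0 _ di_gt0).
have -> : di * ((w1 - w2) * (y1 - y2)) =
  - (w1 * (di * y2 - di * y1)) - w2 * (di * y1 - di * y2) by ring.
lra.
Qed.

Lemma eq_of_aff_monotone x1 x2 :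
  (forall i, 0 <= (aff x1 i - aff x2 i) * (x1 i 0 - x2 i 0)) -> x1 = x2.
Proof.
move=> mono; apply/eqP; rewrite -subr_eq0; apply/eqP; apply: A_negP => i.
have -> : (A *m (x1 - x2)) i 0 = aff x1 i - aff x2 i.
  by rewrite /aff mulmxBr !mxE; ring.
by rewrite mulrC [(x1 - x2) i 0]mxE mxE.
Qed.

Lemma box_vi_unique c x1 x2 : box_vi c x1 -> box_vi c x2 -> x1 = x2.
Proof.
move=> vi1 vi2; apply: eq_of_aff_monotone => i.
exact: coord_vi_monotone (d_gt0 i) (vi1 i) (vi2 i).
Qed.

Definition degenerate_vi_mx (c : 'I_n -> option (R * R)) : 'M[R]_n :=
  \matrix_(i < n, j < n) if c i is None then A i j else (i == j)%:R.

Lemma degenerate_vi_mxE c (x : 'cV[R]_n) i :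
  (degenerate_vi_mx c *m x) i 0 = if c i is None then (A *m x) i 0 else x i 0.
Proof.
rewrite !mxE; under eq_bigr => j _ do rewrite mxE.
case: (c i) => [_|] //; rewrite (bigD1 i) //= eqxx mul1r big1 ?addr0 // => j.
by rewrite eq_sym => /negbTE ->; rewrite mul0r.
Qed.

Lemma degenerate_vi_mx_unit c : degenerate_vi_mx c \in unitmx.
Proof.
rewrite -unitmx_tr unitmxE unitfE; apply/det0P => -[v v_neq0 vM0].
have Mv0 i : (degenerate_vi_mx c *m v^T) i 0 = 0.
  by rewrite -[degenerate_vi_mx c]trmxK -trmx_mul vM0 !mxE.
suff /(congr1 trmx) : v^T = 0 by rewrite trmxK trmx0 => v0; rewrite v0 eqxx in v_neq0.
apply: A_negP => i; have := Mv0 i; rewrite degenerate_vi_mxE.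
by case: (c i) => [_|] ->; rewrite ?mul0r ?mulr0.
Qed.

Lemma box_vi_degenerate c :
  (forall i lo hi, c i = Some (lo, hi) -> lo = hi) -> exists x, box_vi c x.
Proof.
move=> c_deg.
pose r : 'cV[R]_n := \col_i if c i is Some (lo, _) then lo / d i else - u i.
exists (invmx (degenerate_vi_mx c) *m r) => i.
have := congr1 (fun y : 'cV_n => y i 0) (mulKVmx (degenerate_vi_mx_unit c) r).
rewrite /= degenerate_vi_mxE [r i 0]mxE /aff.
case ci: (c i) => [[lo hi]|] ->; last by rewrite addNr.
rewrite /= mulrC divfK ?gt_eqF // -(c_deg i lo hi ci) lexx.
split=> // t /andP[t_ge t_le].
have -> : t = lo by apply/le_anti; rewrite t_le t_ge.
by rewrite subrr mulr0.
Qed.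

Definition box_vi_off k c (x : 'cV[R]_n) : Prop :=
  forall i, i != k -> coord_vi (c i) (d i) (x i 0) (aff x i).

Lemma box_vi_off_eq k c x1 x2 : box_vi_off k c x1 -> box_vi_off k c x2 ->
  0 <= (aff x1 k - aff x2 k) * (x1 k 0 - x2 k 0) -> x1 = x2.
Proof.
move=> vi1 vi2 mono_k; apply: eq_of_aff_monotone => i.
have [-> // | ik] := eqVneq i k.
exact: coord_vi_monotone (d_gt0 i) (vi1 i ik) (vi2 i ik).
Qed.

Lemma box_vi_update k c e x : box_vi [eta c with k |-> e] x ->
  box_vi_off k c x /\ coord_vi e (d k) (x k 0) (aff x k).
Proof.
move=> vi; split=> [i /negbTE ik|]; first by have := vi i; rewrite /= ik.
by have := vi k; rewrite /= eqxx.
Qed.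

Lemma box_vi_of_off k c x : box_vi_off k c x ->
  coord_vi (c k) (d k) (x k 0) (aff x k) -> box_vi c x.
Proof. by move=> vi vik i; have [-> | /vi] := eqVneq i k. Qed.

Lemma box_vi_split c k lo hi : c k = Some (lo, hi) -> lo <= hi ->
  (exists a, box_vi [eta c with k |-> Some (lo, lo)] a) ->
  (exists b, box_vi [eta c with k |-> Some (hi, hi)] b) ->
  (exists z, box_vi [eta c with k |-> None] z) ->
  exists x, box_vi c x.
Proof.
move=> ck lo_le_hi [a /box_vi_update[a_off [/andP[a_ge a_le] _]]].
move=> [b /box_vi_update[b_off [/andP[b_ge b_le] _]]] [z /box_vi_update[z_off z0]].
have dk_gt0 := d_gt0 k.
have da : d k * a k 0 = lo by apply/le_anti; rewrite a_le a_ge.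
have db : d k * b k 0 = hi by apply/le_anti; rewrite b_le b_ge.
have [wa_le0 | wa_gt0] := leP (aff a k) 0.
  exists a; apply: (box_vi_of_off a_off); rewrite ck /= da lexx lo_le_hi.
  by split=> // t /andP[t_ge _]; rewrite mulr_le0_ge0 // subr_ge0.
have [wb_ge0 | wb_lt0] := leP 0 (aff b k).
  exists b; apply: (box_vi_of_off b_off); rewrite ck /= db lexx lo_le_hi.
  by split=> // t /andP[_ t_le]; rewrite mulr_ge0_le0 // subr_le0.
(* Now aff a k > 0 > aff b k: if z left [lo, hi] at k, it would coincide with a or b. *)
exists z; apply: (box_vi_of_off z_off); rewrite ck /= z0.
suff -> : lo <= d k * z k 0 <= hi by split=> // t _; rewrite mul0r.
apply/andP; split; rewrite leNgt; apply/negP => z_out.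
  have za : z = a.
    apply: (box_vi_off_eq z_off a_off); rewrite z0.
    have : z k 0 < a k 0 by rewrite -(ltr_pM2l dk_gt0) da.
    nra.
  by move: wa_gt0; rewrite -za z0 ltxx.
have zb : z = b.
  apply: (box_vi_off_eq z_off b_off); rewrite z0.
  have : b k 0 < z k 0 by rewrite -(ltr_pM2l dk_gt0) db.
  nra.
by move: wb_lt0; rewrite -zb z0 ltxx.
Qed.

Definition ordered_box (e : option (R * R)) : bool :=
  if e is Some (lo, hi) then lo <= hi else true.

Definition proper_box (e : option (R * R)) : bool :=
  if e is Some (lo, hi) then lo < hi else false.

Lemma box_vi_exists c : (forall i, ordered_box (c i)) -> exists x, box_vi c x.
Proof.
have [m] := ubnP #|[set i | proper_box (c i)]|.
elim: m c => // m IH c; rewrite ltnS => card_le c_ord.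
case: (pickP (fun i => proper_box (c i))) => [k | improper]; last first.
  apply: box_vi_degenerate => i lo hi ci; apply/le_anti.
  have := improper i; rewrite /= ci => /negbT; rewrite -leNgt => ->.
  by have := c_ord i; rewrite ci andbT.
case ck: (c k) => [[lo hi]|] //= lt_lohi.
have shrink e : ordered_box e -> ~~ proper_box e ->
    exists x, box_vi [eta c with k |-> e] x.
  move=> e_ord e_improper; apply: IH => [|i]; last by rewrite /=; case: eqP.
  have k_proper : k \in [set i | proper_box (c i)] by rewrite inE ck.
  apply: leq_trans card_le; apply: leq_ltn_trans (proper_card (properD1 k_proper)).
  apply: subset_leq_card; apply/subsetP => i; rewrite !inE /=.
  by case: eqP => [-> | _]; rewrite ?(negbTE e_improper).
apply: (box_vi_split ck (ltW lt_lohi)); by apply: shrink; rewrite /= ?lexx ?ltxx.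
Qed.

End BoxVI.

Lemma lyap_form_diagE (R : comPzRingType) (n : nat) (A : 'M[R]_n)
    (lam : 'rV[R]_n) (v : 'cV[R]_n) :
  (v^T *m (A^T *m diag_mx lam + diag_mx lam *m A) *m v) 0 0 =
  (\sum_i lam 0 i * (v i 0 * (A *m v) i 0)) *+ 2.
Proof.
have e1 : v^T *m (A^T *m diag_mx lam) *m v = (A *m v)^T *m (diag_mx lam *m v).
  by rewrite trmx_mul !mulmxA.
have e2 : v^T *m (diag_mx lam *m A) *m v = (diag_mx lam *m v)^T *m (A *m v).
  by rewrite trmx_mul tr_diag_mx !mulmxA.
rewrite mulmxDr mulmxDl e1 e2 mul_diag_mx mulr2n !mxE.
by congr (_ + _); apply: eq_bigr => i _; rewrite !mxE; ring.
Qed.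

Lemma lyap_diag_stable_neg_P (R : realType) (n : nat) (A : 'M[R]_n) :
  lyap_diag_stable A -> neg_P_matrix A.
Proof.
move=> [lam [lam_gt0 negdef]] v vAv_ge0; apply/eqP/contraT => /negdef.
rewrite lyap_form_diagE ltNge mulrn_wge0 // sumr_ge0 // => i _.
exact: mulr_ge0 (ltW (lam_gt0 i)) (vAv_ge0 i).
Qed.

Section Clamp.
Variable R : realType.

Lemma clamp01_ge0_le1 (z : R) : 0 <= clamp01 z <= 1.
Proof. by rewrite /clamp01 le_max lexx ge_max ler01 ge_min lexx orbT. Qed.

Lemma clamp01_proj (z t : R) : 0 <= t <= 1 ->
  (z - clamp01 z) * (t - clamp01 z) <= 0.
Proof.
move=> /andP[t_ge0 t_le1]; rewrite /clamp01 minEle maxEle.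
by case: (leP z 1) => z_le1; rewrite /= ?ler01 /=; case: (leP 0 z) => z_ge0; nra.
Qed.

Lemma clamp01_eq_iff (z p : R) : 0 <= p <= 1 ->
  clamp01 z = p <-> forall t, 0 <= t <= 1 -> (z - p) * (t - p) <= 0.
Proof.
move=> p01; split=> [<-|p_proj]; first exact: clamp01_proj.
have := p_proj _ (clamp01_ge0_le1 z); have := clamp01_proj z p01.
move=> q_proj {}p_proj; apply/le_anti/andP; split; nra.
Qed.

Lemma clamp01_fixed_iff (tau y w : R) : 0 < tau -> 0 <= y <= 1 ->
  clamp01 (y + tau * w) = y <-> forall t, 0 <= t <= 1 -> w * (t - y) <= 0.
Proof.
move=> tau_gt0 y01; rewrite clamp01_eq_iff // [y + _]addrC addrK.
by split=> vi t t01; have := vi t t01; rewrite -mulrA (pmulr_rle0 _ tau_gt0).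
Qed.

End Clamp.

Section Equilibria.
Variables (R : realType) (n : nat) (d : 'rV[R]_n) (W : 'M[R]_n) (u : 'cV[R]_n).

Lemma Dmat_mulE (x : 'cV[R]_n) i : (Dmat d *m x) i 0 = d 0 i * x i 0.
Proof. by rewrite /Dmat mul_diag_mx mxE. Qed.

Lemma clamp_stepE (y w : 'cV[R]_n) tau i :
  (tau^-1 *: (- y + clampv (y + tau *: w))) i 0 =
  tau^-1 * (clamp01 (y i 0 + tau * w i 0) - y i 0).
Proof. by rewrite !mxE addrC. Qed.

Lemma f_tau_eq0 tau x : 0 < tau ->
  f_tau d W u tau x = 0 <-> forall i,
    clamp01 (d 0 i * x i 0 + tau * aff (W - Dmat d) (fun i => u i 0) x i) =
    d 0 i * x i 0.
Proof.
move=> tau_gt0; split=> [f0 i | fixed].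
  have := congr1 (fun v : 'cV_n => v i 0) f0.
  rewrite /= [X in _ = X]mxE /f_tau clamp_stepE [(_ + u) i 0]mxE !Dmat_mulE.
  by move/eqP; rewrite mulf_eq0 invr_eq0 gt_eqF //= subr_eq0 => /eqP.
apply/matrixP => i j; rewrite ord1 [RHS]mxE /f_tau clamp_stepE.
by rewrite [(_ + u) i 0]mxE !Dmat_mulE fixed subrr mulr0.
Qed.

Lemma equilibriumE tau x : 0 < tau ->
  equilibrium d W u tau x <->
  box_vi (fun i => d 0 i) (W - Dmat d) (fun i => u i 0) (fun=> Some (0, 1)) x.
Proof.
move=> tau_gt0; rewrite /equilibrium f_tau_eq0 //.
split=> [[x01 fixed] i | vi].
  have := x01 i; rewrite Dmat_mulE => dx01.
  by split=> //; apply/(clamp01_fixed_iff _ tau_gt0 dx01)/fixed.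
split=> i; have [dx01 dx_vi] := vi i; first by rewrite Dmat_mulE.
exact/(clamp01_fixed_iff _ tau_gt0 dx01)/dx_vi.
Qed.

End Equilibria.

Theorem proposition2 (R : realType) (n : nat) (d : 'rV[R]_n) (W : 'M[R]_n)
  (u : 'cV[R]_n) (hd : forall i : 'I_n, 0 < d 0 i) :
  (* (i) the equilibrium set does not depend on tau > 0 *)
  (forall tau1 tau2 : R, 0 < tau1 -> 0 < tau2 ->
     forall x : 'cV[R]_n, equilibrium d W u tau1 x <-> equilibrium d W u tau2 x)
  /\
  (* (ii) under Lyapunov diagonal stability of A = W - D, it is a single point *)
  (lyap_diag_stable (W - Dmat d) ->
     forall tau : R, 0 < tau -> exists! x : 'cV[R]_n, equilibrium d W u tau x).
Proof.
split=> [tau1 tau2 tau1_gt0 tau2_gt0 x | /lyap_diag_stable_neg_P A_negP tau tau_gt0].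
  by rewrite !equilibriumE.
have [x vi_x] := box_vi_exists (fun i => u i 0) hd A_negP
  (c := fun=> Some (0, 1)) (fun=> ler01).
exists x; split=> [|y]; rewrite !equilibriumE //.
move=> vi_y; exact: (box_vi_unique hd A_negP vi_x vi_y).
Qed.
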